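(* Let $q$ be a prime power, $k,b,t$ positive integers, and $f:\mathbb{F}_q^k\to \mathrm{Im}(f)$ an arbitrary function. Let $\boldsymbol{x}_1,\ldots,\boldsymbol{x}_{q^k}$ be an enumeration of all vectors of $\mathbb{F}_q^k$. Then \[ N_b\big(\boldsymbol{B}_f^{(1)}(t)\big)\le r_b^f(k,t)\le N_b\big(\boldsymbol{B}_f^{(2)}(t)\big). \]
   Context: For a vector $\boldsymbol{z}=(z_0,\ldots,z_{n-1})\in\mathbb{F}_q^n$, its $b$-symbol read vector is $\pi_b(\boldsymbol{z})=[(z_0,\ldots,z_{b-1}),(z_1,\ldots,z_b),\ldots,(z_{n-1},z_0,\ldots,z_{b-2})]$ (indices modulo $n$), and the $b$-symbol distance of $\boldsymbol{z},\boldsymbol{w}\in\mathbb{F}_q^n$ is $d_b(\boldsymbol{z},\boldsymbol{w})=d_H(\pi_b(\boldsymbol{z}),\pi_b(\boldsymbol{w}))$, i.e. the number of $i\in\{0,\ldots,n-1\}$ with $(z_i,\ldots,z_{i+b-1})\neq(w_i,\ldots,w_{i+b-1})$. A systematic encoding $\mathrm{Enc}:\mathbb{F}_q^k\to\mathbb{F}_q^{k+r}$, $\mathrm{Enc}(\boldsymbol{x})=(\boldsymbol{x},p(\boldsymbol{x}))$ with $p(\boldsymbol{x})\in\mathbb{F}_q^r$, is a function-correcting $b$-symbol code for $f$ (correcting $t$ errors) if $d_b(\mathrm{Enc}(\boldsymbol{x}_1),\mathrm{Enc}(\boldsymbol{x}_2))\ge 2t+1$ for all $\boldsymbol{x}_1,\boldsymbol{x}_2\in\mathbb{F}_q^k$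 with $f(\boldsymbol{x}_1)\ne f(\boldsymbol{x}_2)$. The optimal redundancy $r_b^f(k,t)$ is the smallest $r$ for which such a code exists. For $M\times M$ matrix $\boldsymbol{B}$ with nonnegative integer entries, a $\boldsymbol{B}$-irregular $b$-symbol distance code is a set $\{\boldsymbol{p}_1,\ldots,\boldsymbol{p}_M\}\subseteq \mathbb{F}_q^r$ admitting an ordering with $d_b(\boldsymbol{p}_i,\boldsymbol{p}_j)\ge[\boldsymbol{B}]_{ij}$ for all $i,j$; $N_b(\boldsymbol{B})$ is the smallest length $r$ for which such a code exists. With $[x]^+=\max\{x,0\}$, for vectors $\boldsymbol{x}_1,\ldots,\boldsymbol{x}_M\in\mathbb{F}_q^k$ define $M\times M$ matrices $[\boldsymbol{B}_f^{(1)}(t,\boldsymbol{x}_1,\ldots,\boldsymbol{x}_M)]_{ij}=[2t-b+2-d_b(\boldsymbol{x}_i,\boldsymbol{x}_j)]^+$ if $f(\boldsymbol{x}_i)\ne f(\boldsymbol{x}_j)$ and $0$ otherwise, and $[\boldsymbol{B}_f^{(2)}(t,\boldsymbol{x}_1,\ldots,\boldsymbol{x}_M)]_{ij}=[2t+b-d_b(\boldsymbol{x}_i,\boldsymbol{x}_j)]^+$ if $f(\boldsymbol{x}_i)\ne f(\boldsymbol{x}_j)$ and $0$ otherwise. $\boldsymbol{B}_f^{(1)}(t)$ and $\boldsymbol{B}_f^{(2)}(t)$ denote these matrices for $M=q^k$ and $\boldsymbol{x}_1,\ldots,\boldsymbol{x}_{q^k}$ the enumeration of $\mathbb{F}_q^k$.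 *)

From HB Require Import structures.
From mathcomp Require Import all_boot all_order all_algebra.
From Stdlib Require Import ClassicalEpsilon.
Set Implicit Arguments.
Unset Strict Implicit.
Unset Printing Implicit Defensive.
Import GRing.Theory.

Definition cshift n (i : 'I_n) (j : nat) : 'I_n := iter j (@ordS n) i.

Definition db (F : finFieldType) (n b : nat) (z w : 'rV[F]_n) : nat :=
  #|[set i : 'I_n | [exists j : 'I_b, z ord0 (cshift i j) != w ord0 (cshift i j)]]|.

(* least natural number satisfying P (chosen classically); this is the
   intended minimum whenever some n satisfies P. *)
Definition least (P : nat -> Prop) : nat :=
  epsilon (inhabits 0%N) (fun n => P n /\ forall m, P m -> (n <= m)%N).

(* Systematic encoding x |-> (x, p x) is a function-correcting b-symbol code
   for f correcting t errors. *)
Definition is_FCbSC (F : finFieldType) (Y : eqType) (k r b t : nat)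
  (f : 'rV[F]_k -> Y) (p : 'rV[F]_k -> 'rV[F]_r) : Prop :=
  forall x1 x2 : 'rV[F]_k, f x1 != f x2 ->
    (2 * t + 1 <= db b (row_mx x1 (p x1)) (row_mx x2 (p x2)))%N.

Definition rbf (F : finFieldType) (Y : eqType) (k b t : nat)
  (f : 'rV[F]_k -> Y) : nat :=
  least (fun r => exists p : 'rV[F]_k -> 'rV[F]_r, is_FCbSC b t f p).

Definition is_irr_code (F : finFieldType) (M b r : nat) (B : 'M[nat]_M)
  (P : 'I_M -> 'rV[F]_r) : Prop :=
  forall i j : 'I_M, (B i j <= db b (P i) (P j))%N.

Definition Nb (F : finFieldType) (M b : nat) (B : 'M[nat]_M) : nat :=
  least (fun r => exists P : 'I_M -> 'rV[F]_r, is_irr_code b B P).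

(* B_f^(1)(t, x_1..x_M) and B_f^(2)(t, x_1..x_M); [a - c]^+ is truncated
   nat subtraction. *)
Definition Bf1 (F : finFieldType) (Y : eqType) (k b t M : nat)
  (f : 'rV[F]_k -> Y) (x : 'I_M -> 'rV[F]_k) : 'M[nat]_M :=
  \matrix_(i, j) (if f (x i) != f (x j)
                  then ((2 * t + 2) - (b + db b (x i) (x j)))%N else 0%N).

Definition Bf2 (F : finFieldType) (Y : eqType) (k b t M : nat)
  (f : 'rV[F]_k -> Y) (x : 'I_M -> 'rV[F]_k) : 'M[nat]_M :=
  \matrix_(i, j) (if f (x i) != f (x j)
                  then ((2 * t + b) - db b (x i) (x j))%N else 0%N).

(* Reading a concatenation (x, p) instead of x and p separately changes only
   windows starting in the last b - 1 positions of a block, and windows that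
   gain (resp. lose) a difference cannot start near the ends of both blocks.
   Hence d_b(x, p) <= d_b(x) + d_b(p) + b - 1 and
   d_b(x) + d_b(p) <= d_b(x, p) + b - 1.  The first inequality turns the
   redundancy vectors of an optimal function-correcting code into a
   B_f^(1)-code; the second turns a B_f^(2)-code into a function-correcting
   code, and a B_f^(2)-code exists: give each x_i its own block of 2t + b
   ones. *)

From mathcomp Require Import all_boot all_algebra.
From mathcomp Require Import zify.
From Stdlib Require Import Classical ClassicalEpsilon.

Set Implicit Arguments.
Unset Strict Implicit.

Lemma sub_in_count (T : eqType) (s : seq T) (P Q : pred T) :
  {in s, subpred P Q} -> count P s <= count Q s.
Proof.
move=> PQ; rewrite (@eq_in_count _ P (predI P Q)) => [|x xs /=].
  by apply: sub_count => x /andP[].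
by case Px: (P x); rewrite // PQ.
Qed.

Lemma count_le_predD (T : Type) (s : seq T) (P Q : pred T) :
  count P s <= count Q s + count (predD P Q) s.
Proof.
rewrite -count_predUI; apply: leq_trans (leq_addr _ _).
by apply: sub_count => x /=; case: (Q x).
Qed.

Lemma count_range_iota a c N :
  count (fun m => a <= m < c) (iota 0 N) = minn N c - a.
Proof.
elim: N => [|N IH]; first by rewrite min0n.
rewrite -addn1 iotaD count_cat IH /= add0n; lia.
Qed.

Lemma count_tail_iota N b (P : pred nat) :
  (forall i, i < N -> P i -> N < i + b) -> count P (iota 0 N) <= b - 1.
Proof.
move=> tailP; have := count_range_iota (N + 1 - b) N N.
have : count P (iota 0 N) <= count (fun m => N + 1 - b <= m < N) (iota 0 N).
  apply: sub_in_count => i; rewrite mem_iota add0n => /andP[_ iN] Pi.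
  have := tailP i iN Pi; lia.
lia.
Qed.

Lemma count_iota_add (P : pred nat) k r :
  count P (iota 0 (k + r)) =
  count P (iota 0 k) + count (fun i => P (k + i)) (iota 0 r).
Proof. by rewrite iotaD count_cat add0n -[k]addn0 iotaDl count_map addn0. Qed.

Lemma count_iota_cat_le k r b (P1 Q1 P2 Q2 : pred nat) :
  (forall i, i < k -> P1 i -> ~~ Q1 i -> k < i + b) ->
  (forall j, j < r -> P2 j -> ~~ Q2 j -> r < j + b) ->
  (forall i j, i < k -> j < r -> P1 i -> ~~ Q1 i -> P2 j -> ~~ Q2 j -> False) ->
  count P1 (iota 0 k) + count P2 (iota 0 r) <=
  count Q1 (iota 0 k) + count Q2 (iota 0 r) + (b - 1).
Proof.
move=> tail1 tail2 excl.
have le1 := count_le_predD (iota 0 k) P1 Q1.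
have le2 := count_le_predD (iota 0 r) P2 Q2.
suff : count (predD P1 Q1) (iota 0 k) + count (predD P2 Q2) (iota 0 r) <= b - 1.
  by lia.
have tailD1 i : i < k -> predD P1 Q1 i -> k < i + b.
  by move=> ik /andP[nQ P]; exact: tail1.
have tailD2 j : j < r -> predD P2 Q2 j -> r < j + b.
  by move=> jr /andP[nQ P]; exact: tail2.
have [/hasP[i]|] := boolP (has (predD P1 Q1) (iota 0 k)).
  rewrite mem_iota add0n => /andP[_ ik] /andP[nQ1 P1i].
  have -> : count (predD P2 Q2) (iota 0 r) = 0.
    apply/eqP; rewrite -leqn0 leqNgt -has_count; apply/hasP => -[j].
    rewrite mem_iota add0n => /andP[_ jr] /andP[nQ2 P2j].
    exact: excl ik jr P1i nQ1 P2j nQ2.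
  by rewrite addn0; exact: count_tail_iota.
by rewrite has_count -leqNgt leqn0 => /eqP ->; exact: count_tail_iota.
Qed.

(* For [i, m < n]: [m] lies in the cyclic window [i, ..., i + b - 1] of Z_n. *)
Definition in_cwindow (n b i m : nat) : bool :=
  (i <= m < i + b) || (m < i) && (m + n < i + b).

Definition window_hits (n b : nat) (D : pred nat) (i : nat) : bool :=
  has (fun m => D m && in_cwindow n b i m) (iota 0 n).

Lemma window_hitsP n b (D : pred nat) i :
  reflect (exists2 m, m < n & D m && in_cwindow n b i m) (window_hits n b D i).
Proof.
by apply: (iffP hasP) => -[m mn Hm]; exists m => //; move: mn; rewrite mem_iota.
Qed.

Lemma window_miss n b (D : pred nat) i m :
  ~~ window_hits n b D i -> m < n -> D m -> ~~ in_cwindow n b i m.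
Proof.
move=> /window_hitsP miss mn Dm; apply/negP => w.
by apply: miss; exists m; rewrite ?Dm.
Qed.

Definition cat_support k (Dx Dp : pred nat) (m : nat) : bool :=
  if m < k then Dx m else Dp (m - k).

Section CatWindows.

Variables (k r b : nat) (Dx Dp : pred nat).
Let n := k + r.
Let Dc := cat_support k Dx Dp.

Lemma cat_supportP m : Dc m -> (m < k) && Dx m \/ (k <= m) && Dp (m - k).
Proof. by rewrite /Dc /cat_support; case: ltnP => ? ?; [left | right]. Qed.

Lemma cat_support_left m : m < k -> Dx m -> Dc m.
Proof. by rewrite /Dc /cat_support => ->. Qed.

Lemma cat_support_right m : Dp m -> Dc (k + m).
Proof. by rewrite /Dc /cat_support ltnNge leq_addr addKn. Qed.

Lemma hits_cat_new_left i :
  i < k -> window_hits n b Dc i -> ~~ window_hits k b Dx i -> k < i + b.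
Proof.
move=> ik /window_hitsP[m mn /andP[/cat_supportP Dm w]] miss.
case: Dm => /andP[mk Dm]; last by move: w mk; rewrite /in_cwindow /n; lia.
by have := window_miss miss mk Dm; move: w; rewrite /in_cwindow; lia.
Qed.

Lemma hits_cat_new_right j :
  j < r -> window_hits n b Dc (k + j) -> ~~ window_hits r b Dp j -> r < j + b.
Proof.
move=> jr /window_hitsP[m mn /andP[/cat_supportP Dm w]] miss.
case: Dm => /andP[mk Dm]; first by move: w mk; rewrite /in_cwindow /n; lia.
have mkr : m - k < r by move: mn mk; rewrite /n; lia.
by have := window_miss miss mkr Dm; move: w mk; rewrite /in_cwindow /n; lia.
Qed.

Lemma hits_cat_new_excl i j : i < k -> j < r ->
  window_hits n b Dc i -> ~~ window_hits k b Dx i ->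
  window_hits n b Dc (k + j) -> ~~ window_hits r b Dp j -> False.
Proof.
move=> ik jr /window_hitsP[m mn /andP[/cat_supportP Dm w]] missx.
move=> /window_hitsP[m' m'n /andP[/cat_supportP Dm' w']] missp.
case: Dm => /andP[mk Dm].
  by have := window_miss missx mk Dm; move: w; rewrite /in_cwindow; lia.
have mkr : m - k < r by move: mn mk; rewrite /n; lia.
have := window_miss missp mkr Dm.
case: Dm' => /andP[m'k Dm']; last first.
  have m'kr : m' - k < r by move: m'n m'k; rewrite /n; lia.
  by have := window_miss missp m'kr Dm'; move: w' m'k; rewrite /in_cwindow /n; lia.
have := window_miss missx m'k Dm'.
by move: w w' mk m'k mn m'n; rewrite /in_cwindow /n; lia.
Qed.

Lemma hits_cat_lost_left i :
  i < k -> window_hits k b Dx i -> ~~ window_hits n b Dc i -> k < i + b.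
Proof.
move=> ik /window_hitsP[m mk /andP[Dm w]] miss.
have mn : m < n by rewrite /n; lia.
have := window_miss miss mn (cat_support_left mk Dm).
by move: w; rewrite /in_cwindow /n; lia.
Qed.

Lemma hits_cat_lost_right j :
  j < r -> window_hits r b Dp j -> ~~ window_hits n b Dc (k + j) -> r < j + b.
Proof.
move=> jr /window_hitsP[m mr /andP[Dm w]] miss.
have mn : k + m < n by rewrite /n; lia.
have := window_miss miss mn (cat_support_right Dm).
by move: w; rewrite /in_cwindow /n; lia.
Qed.

Lemma hits_cat_lost_excl i j : i < k -> j < r ->
  window_hits k b Dx i -> ~~ window_hits n b Dc i ->
  window_hits r b Dp j -> ~~ window_hits n b Dc (k + j) -> False.
Proof.
move=> ik jr /window_hitsP[m mk /andP[Dm w]] missi.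
move=> /window_hitsP[m' m'r /andP[Dm' w']] missj.
have mn : m < n by rewrite /n; lia.
have m'n : k + m' < n by rewrite /n; lia.
have := window_miss missi mn (cat_support_left mk Dm).
have := window_miss missi m'n (cat_support_right Dm').
have := window_miss missj mn (cat_support_left mk Dm).
have := window_miss missj m'n (cat_support_right Dm').
by move: w w'; rewrite /in_cwindow /n; lia.
Qed.

Lemma count_hits_cat_le :
  count (window_hits n b Dc) (iota 0 n) <=
  count (window_hits k b Dx) (iota 0 k) +
  count (window_hits r b Dp) (iota 0 r) + (b - 1).
Proof.
rewrite count_iota_add; apply: count_iota_cat_le.
- exact: hits_cat_new_left.
- exact: hits_cat_new_right.
- exact: hits_cat_new_excl.
Qed.

Lemma count_hits_cat_ge :
  count (window_hits k b Dx) (iota 0 k) +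
  count (window_hits r b Dp) (iota 0 r) <=
  count (window_hits n b Dc) (iota 0 n) + (b - 1).
Proof.
rewrite count_iota_add; apply: count_iota_cat_le.
- exact: hits_cat_lost_left.
- exact: hits_cat_lost_right.
- exact: hits_cat_lost_excl.
Qed.

End CatWindows.

Definition differ_at (F : finFieldType) n (z w : 'rV[F]_n) (m : nat) : bool :=
  [exists j : 'I_n, (j == m :> nat) && (z ord0 j != w ord0 j)].

Lemma cshiftE n (i : 'I_n) j : cshift i j = (i + j) %% n :> nat.
Proof.
elim: j => [|j IH]; first by rewrite addn0 modn_small.
by rewrite /cshift iterS -/(cshift i j) /= IH addnS -addn1 modnDml addn1.
Qed.

Lemma in_cwindowP n b (i : 'I_n) m : m < n ->
  reflect (exists j : 'I_b, (i + j) %% n = m) (in_cwindow n b i m).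
Proof.
move=> mn; have ilt := ltn_ord i; apply: (iffP idP) => [w | [j <-]].
  have jb : (if i <= m then m - i else m + n - i) < b.
    by case: (leqP i m); move: w; rewrite /in_cwindow; lia.
  exists (Ordinal jb) => /=; case: (leqP i m) => im.
    by rewrite subnKC // modn_small.
  by rewrite addnBA ?addKn ?modnDr ?modn_small //; lia.
have := ltn_ord j; have := divn_eq (i + j) n.
have : (i + j) %/ n * n = 0 \/ n <= (i + j) %/ n * n.
  by case: ((i + j) %/ n) => [|q]; [left | right; rewrite mulSn leq_addr].
have := ltn_pmod (i + j) (leq_ltn_trans (leq0n i) ilt).
move: ((i + j) %/ n * n) ((i + j) %% n) => Q M.
by rewrite /in_cwindow; lia.
Qed.

Lemma window_hits_differ (F : finFieldType) n b (z w : 'rV[F]_n) (i : 'I_n) :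
  window_hits n b (differ_at z w) i =
  [exists j : 'I_b, z ord0 (cshift i j) != w ord0 (cshift i j)].
Proof.
apply/window_hitsP/existsP => [[m mn /andP[/existsP[l /andP[/eqP lm zw]] wi]] | [j zw]].
  have [j ijm] := in_cwindowP b i mn wi; exists j.
  by have -> : cshift i j = l by apply: val_inj => /=; rewrite cshiftE ijm lm.
exists (cshift i j); first exact: ltn_ord.
apply/andP; split; first by apply/existsP; exists (cshift i j); rewrite eqxx.
by apply/(in_cwindowP b i (ltn_ord _)); exists j; rewrite cshiftE.
Qed.

Lemma db_count (F : finFieldType) n b (z w : 'rV[F]_n) :
  db b z w = count (window_hits n b (differ_at z w)) (iota 0 n).
Proof.
rewrite /db -val_enum_ord count_map cardsE -sum1_card -sum1_count big_enum_cond.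
by apply: eq_bigl => i; rewrite /= window_hits_differ.
Qed.

Lemma differ_at_row_mx (F : finFieldType) k r (x1 x2 : 'rV[F]_k) (p1 p2 : 'rV[F]_r) :
  differ_at (row_mx x1 p1) (row_mx x2 p2) =1
  cat_support k (differ_at x1 x2) (differ_at p1 p2).
Proof.
move=> m; rewrite /cat_support; apply/existsP/idP => [[l /andP[/eqP <-]] | ].
  case: splitP => [l1 e | l2 e].
    rewrite (_ : l = lshift r l1) ?row_mxEl; last exact: val_inj.
    by move=> neq; apply/existsP; exists l1; rewrite eqxx.
  rewrite (_ : l = rshift k l2) ?row_mxEr /= ?addKn; last exact: val_inj.
  by move=> neq; apply/existsP; exists l2; rewrite eqxx.
case: ltnP => mk /existsP[l /andP[/eqP lm neq]].
  by exists (lshift r l); rewrite row_mxEl row_mxEl /= lm eqxx.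
by exists (rshift k l); rewrite row_mxEr row_mxEr /= lm subnKC // eqxx.
Qed.

Lemma db_row_mx (F : finFieldType) k r b (x1 x2 : 'rV[F]_k) (p1 p2 : 'rV[F]_r) :
  db b (row_mx x1 p1) (row_mx x2 p2) =
  count (window_hits (k + r) b (cat_support k (differ_at x1 x2) (differ_at p1 p2)))
    (iota 0 (k + r)).
Proof.
rewrite db_count; apply: eq_count => i; apply: eq_has => m.
by rewrite /= differ_at_row_mx.
Qed.

Lemma db_row_mx_le (F : finFieldType) k r b (x1 x2 : 'rV[F]_k) (p1 p2 : 'rV[F]_r) :
  db b (row_mx x1 p1) (row_mx x2 p2) <= db b x1 x2 + db b p1 p2 + (b - 1).
Proof. by rewrite db_row_mx !db_count; apply: count_hits_cat_le. Qed.

Lemma db_row_mx_ge (F : finFieldType) k r b (x1 x2 : 'rV[F]_k) (p1 p2 : 'rV[F]_r) :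
  db b x1 x2 + db b p1 p2 <= db b (row_mx x1 p1) (row_mx x2 p2) + (b - 1).
Proof. by rewrite db_row_mx !db_count; apply: count_hits_cat_ge. Qed.

Lemma least_spec (P : nat -> Prop) n :
  P n -> P (least P) /\ forall m, P m -> least P <= m.
Proof.
move=> Pn; apply: (epsilon_spec (inhabits 0) (fun n => P n /\ forall m, P m -> n <= m)).
elim/ltn_ind: n Pn => n IH Pn.
have [[m [Pm mn]] | nomin] := classic (exists m, P m /\ m < n); first exact: IH Pm.
by exists n; split=> // m Pm; rewrite leqNgt; apply/negP => mn; apply: nomin; exists m.
Qed.

Lemma least_le (P : nat -> Prop) n : P n -> least P <= n.
Proof. by move=> Pn; apply: (least_spec Pn).2. Qed.

Lemma least_holds (P : nat -> Prop) n : P n -> P (least P).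
Proof. by move=> Pn; apply: (least_spec Pn).1. Qed.

Section OptimalLengths.

Variables (F : finFieldType) (b : nat).

Lemma Nb_le M (B : 'M[nat]_M) r (P : 'I_M -> 'rV[F]_r) :
  is_irr_code b B P -> Nb F b B <= r.
Proof. by move=> codeP; apply: least_le; exists P. Qed.

Lemma Nb_attained M (B : 'M[nat]_M) r (P : 'I_M -> 'rV[F]_r) :
  is_irr_code b B P -> exists P' : 'I_M -> 'rV[F]_(Nb F b B), is_irr_code b B P'.
Proof.
move=> codeP.
exact: (@least_holds (fun r => exists P : 'I_M -> 'rV[F]_r, is_irr_code b B P)
          _ (ex_intro _ P codeP)).
Qed.

Variables (Y : eqType) (k t : nat) (f : 'rV[F]_k -> Y).

Lemma rbf_le r (p : 'rV[F]_k -> 'rV[F]_r) : is_FCbSC b t f p -> rbf b t f <= r.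
Proof. by move=> FCp; apply: least_le; exists p. Qed.

Lemma rbf_attained r (p : 'rV[F]_k -> 'rV[F]_r) :
  is_FCbSC b t f p -> exists p' : 'rV[F]_k -> 'rV[F]_(rbf b t f), is_FCbSC b t f p'.
Proof.
move=> FCp.
exact: (@least_holds (fun r => exists p : 'rV[F]_k -> 'rV[F]_r, is_FCbSC b t f p)
          _ (ex_intro _ p FCp)).
Qed.

End OptimalLengths.

Lemma count_differ_le_db (F : finFieldType) n b (z w : 'rV[F]_n) :
  0 < b -> count (differ_at z w) (iota 0 n) <= db b z w.
Proof.
move=> b_gt0; rewrite db_count; apply: sub_in_count => m.
rewrite mem_iota add0n => /andP[_ mn] dm; apply/window_hitsP; exists m => //.
by rewrite dm /in_cwindow; lia.
Qed.

Definition block_code (F : finFieldType) M s (i : 'I_M) : 'rV[F]_(M * s) :=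
  \row_(m < M * s) (if i * s <= m < i * s + s then 1%R else 0%R).

Lemma db_block_code (F : finFieldType) M s b (i j : 'I_M) : 0 < b -> i != j ->
  s <= db b (block_code F s i) (block_code F s j).
Proof.
move=> b_gt0 ij; apply: leq_trans (count_differ_le_db _ _ b_gt0).
have block_in_range : i * s + s <= M * s by rewrite -mulSnr leq_mul2r ltn_ord orbT.
have := count_range_iota (i * s) (i * s + s) (M * s).
have : count (fun m => i * s <= m < i * s + s) (iota 0 (M * s))
    <= count (differ_at (block_code F s i) (block_code F s j)) (iota 0 (M * s)).
  apply: sub_in_count => m; rewrite mem_iota add0n => /andP[_ mMs] im.
  have jm : ~~ (j * s <= m < j * s + s).
    have [lt | gt | eq] := ltngtP i j; last by rewrite (val_inj eq) eqxx in ij.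
      by have := leq_mul lt (leqnn s); rewrite mulSn; move: im; lia.
    by have := leq_mul gt (leqnn s); rewrite mulSn; move: im; lia.
  apply/existsP; exists (Ordinal mMs); rewrite eqxx !mxE /= im (negbTE jm).
  exact: GRing.oner_neq0.
by lia.
Qed.

Lemma block_code_irr (F : finFieldType) M s b (B : 'M[nat]_M) : 0 < b ->
  (forall i, B i i = 0) -> (forall i j, B i j <= s) ->
  is_irr_code b B (block_code F s).
Proof.
move=> b_gt0 B0 Bs i j; have [-> | ij] := eqVneq i j; first by rewrite B0.
exact: leq_trans (Bs i j) (db_block_code _ _ b_gt0 ij).
Qed.

Lemma FCbSC_Bf1_code (F : finFieldType) (Y : eqType) k r b t (f : 'rV[F]_k -> Y)
    M (x : 'I_M -> 'rV[F]_k) (p : 'rV[F]_k -> 'rV[F]_r) :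
  0 < b -> is_FCbSC b t f p -> is_irr_code b (Bf1 b t f x) (p \o x).
Proof.
move=> b_gt0 FCp i j; rewrite mxE /=; case: ifP => // fx_neq.
by have := FCp _ _ fx_neq; have := db_row_mx_le b (x i) (x j) (p (x i)) (p (x j)); lia.
Qed.

Lemma Bf2_code_FCbSC (F : finFieldType) (Y : eqType) k r b t (f : 'rV[F]_k -> Y)
    M (x : 'I_M -> 'rV[F]_k) (g : 'rV[F]_k -> 'I_M) (P : 'I_M -> 'rV[F]_r) :
  0 < b -> cancel g x -> is_irr_code b (Bf2 b t f x) P -> is_FCbSC b t f (P \o g).
Proof.
move=> b_gt0 gK codeP v1 v2 fv_neq; have := codeP (g v1) (g v2).
rewrite mxE !gK fv_neq /=.
by have := db_row_mx_ge b v1 v2 (P (g v1)) (P (g v2)); lia.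
Qed.

Unset Implicit Arguments.

Theorem theorem3p2 (F : finFieldType) (Y : eqType) (k b t : nat)
  (f : 'rV[F]_k -> Y) (x : 'I_#|{: 'rV[F]_k}| -> 'rV[F]_k) :
  (0 < k)%N -> (0 < b)%N -> (0 < t)%N -> bijective x ->
  (Nb F b (Bf1 b t f x) <= rbf b t f)%N /\
  (rbf b t f <= Nb F b (Bf2 b t f x))%N.
Proof.
move=> _ b_gt0 _ [g _ gK].
have Bf2_block : is_irr_code b (Bf2 b t f x) (block_code F (2 * t + b)).
  apply: block_code_irr => // [i | i j]; rewrite mxE ?eqxx //.
  by case: ifP => // _; apply: leq_subr.
have [P2 codeP2] := Nb_attained Bf2_block.
have FC2 := Bf2_code_FCbSC b_gt0 gK codeP2.
have [p FCp] := rbf_attained FC2.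
by split; [apply: Nb_le (FCbSC_Bf1_code x b_gt0 FCp) | apply: rbf_le FC2].
Qed.
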